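(* Let $G$ be an amenable group and, for $i=1,\ldots,n$, let $A_i\subseteq G$ have positive Banach density $d(A_i)=\alpha_i$. Let $\beta=\prod_{i=1}^n\alpha_i$, $0\le\varepsilon<\beta^2$, and $r=\left\lfloor\frac{\beta-\varepsilon}{\beta^2-\varepsilon}\right\rfloor$. Then $\bigcap_{i=1}^n\Delta_\varepsilon(A_i)$ is $r$-syndetic, and its lower Banach density is at least $1/r$.
   Context: A finite $K\subseteq G$ is $(H,\varepsilon)$-invariant if $K\ne\emptyset$ and $|hK\triangle K|/|K|<\varepsilon$ for all $h\in H$; $G$ is amenable if such $K$ exist for every finite $H\subseteq G$ and $\varepsilon>0$. $d(A)$ is the supremum of all $\alpha$ such that for every finite $H$ and $\varepsilon>0$ there is an $(H,\varepsilon)$-invariant $K$ with $|A\cap K|/|K|\ge\alpha$; the lower Banach density $\underline{d}(A)$ is the supremum of all $\alpha$ such that for some finite $H$ and some $\varepsilon>0$ every $(H,\varepsilon)$-invariant $K$ satisfies $|A\cap K|/|K|\ge\alpha$. $\Delta_\varepsilon(A)=\{g\in G\mid d(A\cap gA)>\varepsilon\}$. A set $S\subseteq G$ is $k$-syndetic if $G=FS$ for some $F\subseteq G$ with $|F|\le k$. *)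

From Stdlib Require Import Reals List ClassicalEpsilon.
Import ListNotations.
Open Scope R_scope.

Record Group := {
  carrier :> Type;
  gmul : carrier -> carrier -> carrier;
  ginv : carrier -> carrier;
  gone : carrier;
  gmul_assoc : forall x y z, gmul x (gmul y z) = gmul (gmul x y) z;
  gmul_1l : forall x, gmul gone x = x;
  gmul_Vl : forall x, gmul (ginv x) x = gone
}.

Definition countP {T : Type} (P : T -> Prop) (l : list T) : nat :=
  length (filter (fun x => if excluded_middle_informative (P x) then true else false) l).

(* Finite subsets of G are represented by duplicate-free lists. *)
Definition symdiff_card (G : Group) (h : G) (K : list G) : nat :=
  let hK := map (gmul G h) K in
  (countP (fun x => ~ In x K) hK + countP (fun x => ~ In x hK) K)%nat.

Definition invariant (G : Group) (H : list G) (eps : R) (K : list G) : Prop :=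
  NoDup K /\ K <> [] /\
  forall h, In h H -> INR (symdiff_card G h K) / INR (length K) < eps.

Definition amenable (G : Group) : Prop :=
  forall (H : list G) (eps : R), 0 < eps -> exists K, invariant G H eps K.

Definition ratio (G : Group) (A : G -> Prop) (K : list G) : R :=
  INR (countP A K) / INR (length K).

Definition upper_admissible (G : Group) (A : G -> Prop) (alpha : R) : Prop :=
  forall (H : list G) (eps : R), 0 < eps ->
    exists K, invariant G H eps K /\ alpha <= ratio G A K.

Definition banach_density (G : Group) (A : G -> Prop) (d : R) : Prop :=
  is_lub (upper_admissible G A) d.

Definition lower_admissible (G : Group) (A : G -> Prop) (alpha : R) : Prop :=
  exists (H : list G) (eps : R), 0 < eps /\
    forall K, invariant G H eps K -> alpha <= ratio G A K.

Definition lower_banach_density (G : Group) (A : G -> Prop) (d : R) : Prop :=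
  is_lub (lower_admissible G A) d.

Definition ltranslate (G : Group) (g : G) (A : G -> Prop) : G -> Prop :=
  fun x => A (gmul G (ginv G g) x).

Definition DeltaSet (G : Group) (eps : R) (A : G -> Prop) : G -> Prop :=
  fun g => exists d, banach_density G (fun x => A x /\ ltranslate G g A x) d /\ eps < d.

Definition syndetic (G : Group) (k : nat) (S : G -> Prop) : Prop :=
  exists F : list G, (length F <= k)%nat /\
    forall g : G, exists f s, In f F /\ S s /\ g = gmul G f s.

Fixpoint prodR (f : nat -> R) (n : nat) : R :=
  match n with O => 1 | S m => prodR f m * f m end.

(* Let S = Δ_eps(A_0) ∩ ... ∩ Δ_eps(A_{n-1}) and beta = Π_l d(A_l).  Call
   g_0, ..., g_{k-1} an S-separated family if g_i⁻¹ g_j ∉ S for all i < j.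
   The heart of the proof is the bound k (beta² - eps) ≤ beta - eps for separated
   families (so k ≤ r).  Fixing a small delta > 0, we pick for each l a finite
   almost invariant set K_l on which every translate g_j A_l has frequency ≈ d(A_l)
   and, for each pair i < j, some separating coordinate l has g_i A_l ∩ g_j A_l of
   frequency ≤ eps + delta.  On the product K_0 × ... × K_{n-1}, the counting function
   F(y) = #{j | y_l ∈ g_j A_l for all l} has mean ≈ k beta and second moment at most
   ≈ k (beta + (k - 1) eps); Cauchy–Schwarz (mean² ≤ second moment) and delta → 0 give
   the bound.  A separated family of maximal length k ≤ r cannot be extended by any x,
   so G = {g_0, ..., g_{k-1}} S; and an r-syndetic set has lower Banach density ≥ 1/r,
   because its r translates cover every almost invariant finite set. *)

From Stdlib Require Import Reals List Lra Lia FunctionalExtensionality Classical FinFun ClassicalEpsilon.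
Import ListNotations.
Open Scope R_scope.

Section GroupIdentities.
Variable G : Group.

Lemma gmul_Vr (x : G) : gmul G x (ginv G x) = gone G.
Proof.
  set (y := ginv G x).
  rewrite <- (gmul_1l G (gmul G x y)), <- (gmul_Vl G y), <- gmul_assoc.
  replace (gmul G y (gmul G x y)) with y; [reflexivity|].
  rewrite gmul_assoc. unfold y. rewrite gmul_Vl, gmul_1l. reflexivity.
Qed.

Lemma gmul_1r (x : G) : gmul G x (gone G) = x.
Proof. rewrite <- (gmul_Vl G x), gmul_assoc, gmul_Vr, gmul_1l. reflexivity. Qed.

Lemma gmul_KV (a x : G) : gmul G (ginv G a) (gmul G a x) = x.
Proof. rewrite gmul_assoc, gmul_Vl, gmul_1l. reflexivity. Qed.

Lemma gmul_VK (a x : G) : gmul G a (gmul G (ginv G a) x) = x.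
Proof. rewrite gmul_assoc, gmul_Vr, gmul_1l. reflexivity. Qed.

Lemma ginv_unique (u v : G) : gmul G u v = gone G -> u = ginv G v.
Proof.
  intro H. rewrite <- (gmul_1r u), <- (gmul_Vr v), gmul_assoc, H, gmul_1l.
  reflexivity.
Qed.

Lemma ginv_mul (a b : G) : ginv G (gmul G a b) = gmul G (ginv G b) (ginv G a).
Proof.
  symmetry. apply ginv_unique. rewrite <- gmul_assoc, gmul_KV, gmul_Vl. reflexivity.
Qed.

Lemma ltranslate_mul (a b : G) (A : G -> Prop) (x : G) :
  ltranslate G a (ltranslate G b A) x <-> ltranslate G (gmul G a b) A x.
Proof.
  unfold ltranslate. rewrite ginv_mul, <- gmul_assoc. tauto.
Qed.

End GroupIdentities.

Section Counting.
Context {T : Type}.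
Implicit Types (P Q : T -> Prop) (l : list T).

Lemma countP_cons P x l :
  countP P (x :: l) =
  ((if excluded_middle_informative (P x) then 1 else 0) + countP P l)%nat.
Proof. unfold countP; simpl. destruct (excluded_middle_informative (P x)); reflexivity. Qed.

Lemma countP_le_length P l : (countP P l <= length l)%nat.
Proof.
  induction l as [|x l IH]; [cbn; lia|]. rewrite countP_cons; cbn [length].
  destruct (excluded_middle_informative (P x)); lia.
Qed.

Lemma countP_ext P Q l : (forall x, P x <-> Q x) -> countP P l = countP Q l.
Proof.
  intro H. induction l as [|x l IH]; [reflexivity|]. rewrite !countP_cons, IH.
  destruct (excluded_middle_informative (P x)), (excluded_middle_informative (Q x)); firstorder.
Qed.

Lemma countP_cover P Q1 Q2 l :
  (forall x, P x -> Q1 x \/ Q2 x) -> (countP P l <= countP Q1 l + countP Q2 l)%nat.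
Proof.
  intro H. induction l as [|x l IH]; [cbn; lia|]. rewrite !countP_cons.
  destruct (excluded_middle_informative (P x)), (excluded_middle_informative (Q1 x)),
    (excluded_middle_informative (Q2 x)); try lia.
  destruct (H x p); contradiction.
Qed.

Lemma countP_in_other P l1 l2 :
  NoDup l1 -> (countP (fun x => P x /\ In x l2) l1 <= countP P l2)%nat.
Proof.
  intro Hnd. unfold countP. apply NoDup_incl_length.
  - apply NoDup_filter; auto.
  - intros x Hx. apply filter_In in Hx as [Hx1 Hx2].
    destruct (excluded_middle_informative (P x /\ In x l2)) as [[Hp Hi]|]; [|discriminate].
    apply filter_In. split; auto. destruct (excluded_middle_informative (P x)); tauto.
Qed.

Lemma countP_compare P l1 l2 :
  NoDup l1 -> (countP P l1 <= countP P l2 + countP (fun x => ~ In x l2) l1)%nat.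
Proof.
  intro Hnd.
  pose proof (countP_cover P (fun x => P x /\ In x l2) (fun x => ~ In x l2) l1) as Hc.
  pose proof (countP_in_other P l1 l2 Hnd).
  enough ((countP P l1 <= countP (fun x => P x /\ In x l2) l1 + countP (fun x => ~ In x l2) l1)%nat)
    by lia.
  apply Hc. intros x Hx. destruct (classic (In x l2)); tauto.
Qed.

End Counting.

Lemma countP_map {T U : Type} (P : U -> Prop) (f : T -> U) (l : list T) :
  countP P (map f l) = countP (fun x => P (f x)) l.
Proof. induction l as [|x l IH]; [reflexivity|]. simpl map. rewrite !countP_cons, IH. reflexivity. Qed.

Lemma length_pos {T : Type} (K : list T) : K <> [] -> 0 < INR (length K).
Proof.
  intro H. destruct K as [|x K]; [congruence|]. cbn [length]. rewrite S_INR.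
  pose proof (pos_INR (length K)). lra.
Qed.

Section Ratios.
Variable G : Group.

Lemma map_mul_NoDup (h : G) (K : list G) : NoDup K -> NoDup (map (gmul G h) K).
Proof.
  intro H. apply Injective_map_NoDup; auto.
  intros x y E. rewrite <- (gmul_KV G h x), <- (gmul_KV G h y), E. reflexivity.
Qed.

Lemma translate_count (h : G) (K : list G) (P : G -> Prop) : NoDup K ->
  (countP P (map (gmul G h) K) <= countP P K + symdiff_card G h K)%nat /\
  (countP P K <= countP P (map (gmul G h) K) + symdiff_card G h K)%nat.
Proof.
  intro Hnd. unfold symdiff_card. split.
  - pose proof (countP_compare P (map (gmul G h) K) K (map_mul_NoDup h K Hnd)). lia.
  - pose proof (countP_compare P K (map (gmul G h) K) Hnd). lia.
Qed.

Lemma ratio_bounds (P : G -> Prop) (K : list G) : K <> [] -> 0 <= ratio G P K <= 1.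
Proof.
  intro H. unfold ratio. pose proof (length_pos K H).
  pose proof (le_INR _ _ (countP_le_length P K)). pose proof (pos_INR (countP P K)).
  split.
  - unfold Rdiv. apply Rmult_le_pos; [lra|]. left; apply Rinv_0_lt_compat; lra.
  - apply Rmult_le_reg_r with (INR (length K)); [lra|].
    unfold Rdiv. rewrite Rmult_assoc, Rinv_l by lra. lra.
Qed.

Lemma ratio_ext (P Q : G -> Prop) (K : list G) : (forall x, P x <-> Q x) ->
  ratio G P K = ratio G Q K.
Proof. intro H. unfold ratio. rewrite (countP_ext P Q K H). reflexivity. Qed.

Lemma ratio_ltranslate_close (H : list G) (eta : R) (K : list G) (g : G) (P : G -> Prop) :
  invariant G H eta K -> In (ginv G g) H ->
  ratio G (ltranslate G g P) K <= ratio G P K + eta /\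
  ratio G P K <= ratio G (ltranslate G g P) K + eta.
Proof.
  intros [Hnd [Hne Hinv]] Hg. specialize (Hinv _ Hg).
  destruct (translate_count (ginv G g) K P Hnd) as [T1 T2].
  apply le_INR in T1, T2. rewrite plus_INR in T1, T2.
  pose proof (length_pos K Hne) as HL.
  assert (Hltr : ratio G (ltranslate G g P) K = ratio G P (map (gmul G (ginv G g)) K)).
  { unfold ratio, ltranslate. rewrite countP_map, length_map. reflexivity. }
  rewrite Hltr. unfold ratio. rewrite length_map.
  set (L := INR (length K)) in *.
  assert (Hs : INR (symdiff_card G (ginv G g) K) < eta * L).
  { apply (Rmult_lt_compat_r L) in Hinv; [|exact HL]. unfold Rdiv in Hinv.
    rewrite Rmult_assoc, Rinv_l in Hinv by lra. lra. }
  split; apply Rmult_le_reg_r with L; auto; unfold Rdiv;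
    rewrite Rmult_plus_distr_r, !Rmult_assoc, Rinv_l by lra; lra.
Qed.

End Ratios.

Fixpoint sumN (f : nat -> R) (k : nat) : R :=
  match k with O => 0 | S k' => sumN f k' + f k' end.

Lemma sumN_ext f g k : (forall i, (i < k)%nat -> f i = g i) -> sumN f k = sumN g k.
Proof. induction k; intro H; simpl; [reflexivity|]. rewrite IHk, H; auto. Qed.

Lemma sumN_le f g k : (forall i, (i < k)%nat -> f i <= g i) -> sumN f k <= sumN g k.
Proof.
  induction k; intro H; simpl; [lra|].
  assert (sumN f k <= sumN g k) by (apply IHk; intros; apply H; lia).
  pose proof (H k ltac:(lia)). lra.
Qed.

Lemma sumN_const c k : sumN (fun _ => c) k = c * INR k.
Proof. induction k; simpl sumN; [simpl; ring|]. rewrite IHk, S_INR. ring. Qed.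

Lemma sumN_mulr f c k : sumN f k * c = sumN (fun i => f i * c) k.
Proof. induction k; simpl; [ring|]. rewrite <- IHk. ring. Qed.

Lemma sumN_mull f c k : c * sumN f k = sumN (fun i => c * f i) k.
Proof. induction k; simpl; [ring|]. rewrite <- IHk. ring. Qed.

Lemma sumN_sq f k : sumN f k * sumN f k = sumN (fun i => sumN (fun j => f i * f j) k) k.
Proof. rewrite sumN_mulr. apply sumN_ext. intros i _. rewrite sumN_mull. reflexivity. Qed.

Lemma sumN_diag (i : nat) (U c : R) k : (i < k)%nat ->
  sumN (fun j => if Nat.eq_dec j i then U else c) k = c * INR k + (U - c).
Proof.
  induction k; intro Hi; [lia|]. simpl sumN. rewrite S_INR.
  destruct (Nat.eq_dec k i) as [->|Hki].
  - rewrite (sumN_ext _ (fun _ => c)), sumN_const; [ring|].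
    intros j Hj. destruct (Nat.eq_dec j i); [lia|reflexivity].
  - rewrite IHk by lia. ring.
Qed.

Lemma prodR_ext f g n : (forall l, (l < n)%nat -> f l = g l) -> prodR f n = prodR g n.
Proof. induction n; intro H; simpl; [reflexivity|]. rewrite IHn, H; auto. Qed.

Lemma prodR_mul f g n : prodR f n * prodR g n = prodR (fun l => f l * g l) n.
Proof. induction n; simpl; [ring|]. rewrite <- IHn. ring. Qed.

Lemma prodR_pos f n : (forall l, (l < n)%nat -> 0 < f l) -> 0 < prodR f n.
Proof.
  induction n; intro H; simpl; [lra|].
  assert (0 < prodR f n) by (apply IHn; intros; apply H; lia).
  pose proof (H n ltac:(lia)). nra.
Qed.

Lemma prodR_bounds f n : (forall l, (l < n)%nat -> 0 <= f l <= 1) -> 0 <= prodR f n <= 1.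
Proof.
  induction n; intro H; simpl; [lra|].
  assert (0 <= prodR f n <= 1) by (apply IHn; intros; apply H; lia).
  pose proof (H n ltac:(lia)). nra.
Qed.

Lemma prodR_le_factor f n m : (forall l, (l < n)%nat -> 0 <= f l <= 1) -> (m < n)%nat ->
  prodR f n <= f m.
Proof.
  induction n; intros H Hm; [lia|]. simpl.
  assert (0 <= prodR f n <= 1) by (apply prodR_bounds; intros; apply H; lia).
  pose proof (H n ltac:(lia)).
  destruct (Nat.eq_dec m n) as [->|Hmn]; [nra|].
  assert (prodR f n <= f m) by (apply IHn; [intros; apply H|]; lia).
  pose proof (H m ltac:(lia)). nra.
Qed.

Lemma prodR_close x y n d : 0 <= d ->
  (forall l, (l < n)%nat -> 0 <= x l <= 1 /\ 0 <= y l <= 1 /\ x l - d <= y l <= x l + d) ->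
  prodR x n - INR n * d <= prodR y n <= prodR x n + INR n * d.
Proof.
  intro Hd. induction n; intro H; simpl prodR; [simpl; lra|].
  assert (IH : prodR x n - INR n * d <= prodR y n <= prodR x n + INR n * d)
    by (apply IHn; intros; apply H; lia).
  assert (0 <= prodR x n <= 1) by (apply prodR_bounds; intros; apply H; lia).
  destruct (H n ltac:(lia)) as [Hx [Hy Hxy]]. rewrite S_INR.
  set (X := prodR x n) in *. set (Y := prodR y n) in *. set (N := INR n) in *.
  assert (HN : 0 <= N) by apply pos_INR.
  assert (E : Y * y n - X * x n = (Y - X) * y n + X * (y n - x n)) by ring.
  assert (-(N * d) <= (Y - X) * y n <= N * d) by (split; nra).
  assert (- d <= X * (y n - x n) <= d) by (split; nra).
  lra.
Qed.

Definition indic {T : Type} (P : T -> Prop) (x : T) : R :=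
  if excluded_middle_informative (P x) then 1 else 0.

Fixpoint sumL {T : Type} (f : T -> R) (l : list T) : R :=
  match l with [] => 0 | x :: l' => f x + sumL f l' end.

Definition avg {T : Type} (K : list T) (f : T -> R) : R := sumL f K / INR (length K).

Section Averages.
Context {T : Type}.
Implicit Types (f g : T -> R) (K : list T).

Lemma sumL_add f g K : sumL (fun x => f x + g x) K = sumL f K + sumL g K.
Proof. induction K; simpl; lra. Qed.

Lemma sumL_scal (c : R) f K : sumL (fun x => c * f x) K = c * sumL f K.
Proof. induction K; simpl; [lra|]. rewrite IHK. ring. Qed.

Lemma sumL_const (c : R) K : sumL (fun _ => c) K = c * INR (length K).
Proof. induction K; simpl length; [simpl; ring|]. rewrite S_INR. simpl. rewrite IHK. ring. Qed.

Lemma sumL_le f g K : (forall x, In x K -> f x <= g x) -> sumL f K <= sumL g K.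
Proof.
  intro H; induction K as [|a K IH]; simpl; [lra|].
  assert (f a <= g a) by (apply H; now left).
  assert (sumL f K <= sumL g K) by (apply IH; intros; apply H; now right). lra.
Qed.

Lemma sumL_nonneg f K : (forall y, 0 <= f y) -> 0 <= sumL f K.
Proof. intro H. induction K as [|a K IH]; simpl; [lra|]. specialize (H a). lra. Qed.

Lemma sumL_ge_elem f K x : (forall y, 0 <= f y) -> In x K -> f x <= sumL f K.
Proof.
  intros H Hx. induction K as [|a K IH]; [destruct Hx|]. simpl.
  pose proof (sumL_nonneg f K H). pose proof (H a).
  destruct Hx as [->|Hx]; [lra|]. specialize (IH Hx). lra.
Qed.

Lemma sumL_indic (P : T -> Prop) K : sumL (indic P) K = INR (countP P K).
Proof.
  induction K as [|a K IH]; [reflexivity|]. rewrite countP_cons, plus_INR. simpl. rewrite IH.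
  unfold indic. destruct (excluded_middle_informative (P a)); simpl; lra.
Qed.

Lemma indic_mul (P Q : T -> Prop) x :
  indic P x * indic Q x = indic (fun z => P z /\ Q z) x.
Proof.
  unfold indic. destruct (excluded_middle_informative (P x)), (excluded_middle_informative (Q x)),
    (excluded_middle_informative (P x /\ Q x)); try tauto; lra.
Qed.

Lemma avg_indic (P : T -> Prop) K : avg K (indic P) = INR (countP P K) / INR (length K).
Proof. unfold avg. rewrite sumL_indic. reflexivity. Qed.

Lemma avg_add K f g : avg K (fun x => f x + g x) = avg K f + avg K g.
Proof. unfold avg. rewrite sumL_add. unfold Rdiv. ring. Qed.

Lemma avg_scal K c f : avg K (fun x => c * f x) = c * avg K f.
Proof. unfold avg. rewrite sumL_scal. unfold Rdiv. ring. Qed.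

Lemma avg_const K c : K <> [] -> avg K (fun _ => c) = c.
Proof. intro H. unfold avg. rewrite sumL_const. pose proof (length_pos K H). field. lra. Qed.

Lemma avg_le K f g : K <> [] -> (forall x, f x <= g x) -> avg K f <= avg K g.
Proof.
  intros H Hle. unfold avg. pose proof (length_pos K H). apply Rmult_le_compat_r.
  - left; apply Rinv_0_lt_compat; auto.
  - apply sumL_le; auto.
Qed.

Definition upd (y : nat -> T) (m : nat) (x : T) : nat -> T :=
  fun l => if Nat.eq_dec l m then x else y l.

(* The average of F over the product K 0 × ... × K (m-1), the coordinates
   beyond m-1 being frozen to t0: it averages out one coordinate at a time. *)
Fixpoint prod_avg (t0 : T) (K : nat -> list T) (m : nat) (F : (nat -> T) -> R) : R :=
  match m with
  | O => F (fun _ => t0)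
  | S m' => avg (K m') (fun x => prod_avg t0 K m' (fun y => F (upd y m' x)))
  end.

Section ProductAverage.
Variables (t0 : T) (K : nat -> list T).
Hypothesis K_nonempty : forall l, K l <> [].

Lemma prod_avg_add m F F' :
  prod_avg t0 K m (fun y => F y + F' y) = prod_avg t0 K m F + prod_avg t0 K m F'.
Proof.
  revert F F'; induction m; intros; simpl; [reflexivity|].
  rewrite <- avg_add. f_equal. apply functional_extensionality; intro x. apply IHm.
Qed.

Lemma prod_avg_scal m c F : prod_avg t0 K m (fun y => c * F y) = c * prod_avg t0 K m F.
Proof.
  revert F; induction m; intros; simpl; [reflexivity|].
  rewrite <- avg_scal. f_equal. apply functional_extensionality; intro x. apply IHm.
Qed.

Lemma prod_avg_const m c : prod_avg t0 K m (fun _ => c) = c.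
Proof. induction m; simpl; [reflexivity|]. rewrite IHm. apply avg_const; auto. Qed.

Lemma prod_avg_le m F F' : (forall y, F y <= F' y) -> prod_avg t0 K m F <= prod_avg t0 K m F'.
Proof. revert F F'; induction m; intros F F' H; simpl; [auto|]. apply avg_le; auto. Qed.

Lemma prod_avg_sum m (F : nat -> (nat -> T) -> R) k :
  prod_avg t0 K m (fun y => sumN (fun j => F j y) k) = sumN (fun j => prod_avg t0 K m (F j)) k.
Proof. induction k; simpl; [apply prod_avg_const|]. rewrite prod_avg_add, IHk. reflexivity. Qed.

Lemma prod_avg_prod m (f : nat -> T -> R) :
  prod_avg t0 K m (fun y => prodR (fun l => f l (y l)) m) = prodR (fun l => avg (K l) (f l)) m.
Proof.
  induction m; simpl; [reflexivity|].
  set (c := prodR (fun l => avg (K l) (f l)) m) in *.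
  transitivity (avg (K m) (fun x => f m x * c)).
  - f_equal. apply functional_extensionality; intro x.
    rewrite <- IHm, <- prod_avg_scal. f_equal. apply functional_extensionality; intro y.
    unfold upd at 2. destruct (Nat.eq_dec m m); [|congruence].
    rewrite (prodR_ext _ (fun l => f l (y l))); [ring|].
    intros l Hl. unfold upd. destruct (Nat.eq_dec l m); [lia|reflexivity].
  - rewrite <- avg_scal. f_equal. apply functional_extensionality; intro x. ring.
Qed.

(* Cauchy–Schwarz (variance is nonnegative): (E F)² ≤ E F². *)
Lemma prod_avg_cauchy_schwarz m F :
  prod_avg t0 K m F * prod_avg t0 K m F <= prod_avg t0 K m (fun y => F y * F y).
Proof.
  set (c := prod_avg t0 K m F).
  assert (Hvar : prod_avg t0 K m (fun _ => 0) <= prod_avg t0 K m (fun y => (F y - c) * (F y - c))).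
  { apply prod_avg_le. intro y. pose proof (Rle_0_sqr (F y - c)). unfold Rsqr in *. lra. }
  rewrite prod_avg_const in Hvar.
  replace (fun y => (F y - c) * (F y - c)) with
    (fun y => (F y * F y + (-2 * c) * F y) + c * c) in Hvar
    by (apply functional_extensionality; intro; ring).
  rewrite !prod_avg_add, prod_avg_scal, prod_avg_const in Hvar. fold c in Hvar. nra.
Qed.

End ProductAverage.
End Averages.

(* It is Cauchy–Schwarz for the counting function y ↦ #{j | y_l ∈ B_jl for all l}. *)
Lemma correlation_inequality (G : Group) (K : nat -> list G) (B : nat -> nat -> G -> Prop)
  (n k : nat) :
  (forall l, K l <> []) ->
  sumN (fun j => prodR (fun l => ratio G (B j l) (K l)) n) k *
  sumN (fun j => prodR (fun l => ratio G (B j l) (K l)) n) k <=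
  sumN (fun i => sumN (fun j =>
    prodR (fun l => ratio G (fun x => B i l x /\ B j l x) (K l)) n) k) k.
Proof.
  intro HK.
  assert (Hprod : forall P : nat -> G -> Prop,
    prod_avg (gone G) K n (fun y => prodR (fun l => indic (P l) (y l)) n) =
    prodR (fun l => ratio G (P l) (K l)) n).
  { intro P. rewrite (prod_avg_prod (gone G) K n (fun l => indic (P l))).
    apply prodR_ext. intros l _. apply avg_indic. }
  set (F := fun y : nat -> G => sumN (fun j => prodR (fun l => indic (B j l) (y l)) n) k).
  assert (EF : prod_avg (gone G) K n F = sumN (fun j => prodR (fun l => ratio G (B j l) (K l)) n) k).
  { unfold F. rewrite (prod_avg_sum _ _ HK _ (fun j y => prodR (fun l => indic (B j l) (y l)) n)).
    apply sumN_ext. intros j _. apply Hprod. }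
  assert (EF2 : prod_avg (gone G) K n (fun y => F y * F y) =
    sumN (fun i => sumN (fun j =>
      prodR (fun l => ratio G (fun x => B i l x /\ B j l x) (K l)) n) k) k).
  { replace (fun y => F y * F y) with (fun y => sumN (fun i => sumN (fun j =>
        prodR (fun l => indic (fun x => B i l x /\ B j l x) (y l)) n) k) k).
    2:{ apply functional_extensionality; intro y. unfold F. rewrite sumN_sq.
        apply sumN_ext; intros i _. apply sumN_ext; intros j _. rewrite prodR_mul.
        apply prodR_ext; intros l _. symmetry; apply indic_mul. }
    rewrite (prod_avg_sum _ _ HK _ (fun i y => sumN (fun j =>
        prodR (fun l => indic (fun x => B i l x /\ B j l x) (y l)) n) k)).
    apply sumN_ext; intros i _.
    rewrite (prod_avg_sum _ _ HK _ (fun j y =>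
        prodR (fun l => indic (fun x => B i l x /\ B j l x) (y l)) n)).
    apply sumN_ext; intros j _. apply Hprod. }
  rewrite <- EF, <- EF2. apply prod_avg_cauchy_schwarz; exact HK.
Qed.

Section Density.
Variable G : Group.

Definition eventually (P : list G -> Prop) : Prop :=
  exists H eta, 0 < eta /\ forall K, invariant G H eta K -> P K.

Lemma eventually_true (P : list G -> Prop) : (forall K, P K) -> eventually P.
Proof. intro H. exists [], 1. split; [lra|]. auto. Qed.

Lemma eventually_and (P Q : list G -> Prop) :
  eventually P -> eventually Q -> eventually (fun K => P K /\ Q K).
Proof.
  intros [H1 [e1 [He1 HP]]] [H2 [e2 [He2 HQ]]].
  exists (H1 ++ H2), (Rmin e1 e2). split; [apply Rmin_pos; auto|].
  intros K [Hnd [Hne Hinv]]. split.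
  - apply HP. repeat split; auto. intros h Hh.
    pose proof (Hinv h ltac:(apply in_or_app; auto)). pose proof (Rmin_l e1 e2). lra.
  - apply HQ. repeat split; auto. intros h Hh.
    pose proof (Hinv h ltac:(apply in_or_app; auto)). pose proof (Rmin_r e1 e2). lra.
Qed.

Lemma eventually_impl (Q : Prop) (P : list G -> Prop) :
  (Q -> eventually P) -> eventually (fun K => Q -> P K).
Proof.
  intro H. destruct (classic Q) as [q|nq].
  - destruct (H q) as [H1 [e [He HP]]]. exists H1, e. split; auto.
  - apply eventually_true. intros; contradiction.
Qed.

Lemma eventually_forall_lt (P : nat -> list G -> Prop) k :
  (forall j, (j < k)%nat -> eventually (P j)) ->
  eventually (fun K => forall j, (j < k)%nat -> P j K).
Proof.
  induction k; intro H; [apply eventually_true; intros; lia|].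
  destruct (eventually_and (fun K => forall j, (j < k)%nat -> P j K) (P k)) as [H1 [e [He HP]]].
  - apply IHk. intros; apply H; lia.
  - apply H; lia.
  - exists H1, e. split; auto. intros K Hk j Hj. destruct (HP K Hk) as [Ha Hb].
    destruct (Nat.eq_dec j k) as [->|]; auto. apply Ha; lia.
Qed.

Lemma eventually_translate_close (g : G) (eta : R) : 0 < eta ->
  eventually (fun K => forall P, ratio G (ltranslate G g P) K <= ratio G P K + eta /\
                                 ratio G P K <= ratio G (ltranslate G g P) K + eta).
Proof.
  intro He. exists [ginv G g], eta. split; auto.
  intros K HK P. apply (ratio_ltranslate_close G [ginv G g]); auto. now left.
Qed.

Lemma eventually_below_density (C : G -> Prop) d b :
  banach_density G C d -> d < b -> eventually (fun K => ratio G C K < b).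
Proof.
  intros [Hub _] Hdb.
  assert (Hn : ~ upper_admissible G C b) by (intro Ha; specialize (Hub b Ha); lra).
  unfold upper_admissible in Hn.
  apply not_all_ex_not in Hn as [H Hn]. apply not_all_ex_not in Hn as [e Hn].
  apply imply_to_and in Hn as [He Hn].
  exists H, e. split; auto. intros K HK. apply Rnot_le_lt. intro Hr. apply Hn. exists K. auto.
Qed.

Lemma density_frequently_above (C : G -> Prop) d (P : list G -> Prop) delta :
  banach_density G C d -> eventually P -> 0 < delta ->
  exists K, P K /\ NoDup K /\ K <> [] /\ d - delta <= ratio G C K.
Proof.
  intros [_ Hl] [H [e [He HP]]] Hdelta.
  assert (exists a, upper_admissible G C a /\ d - delta < a) as [a [Ha Hda]].
  { apply NNPP. intro Hn. assert (d <= d - delta); [|lra]. apply Hl. intros a Ha.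
    apply Rnot_lt_le. intro. apply Hn. exists a; auto. }
  destruct (Ha H e He) as [K [HK Hr]]. pose proof HK as [Hnd [Hne _]].
  exists K. repeat split; auto. lra.
Qed.

Lemma banach_density_exists (HG : amenable G) (C : G -> Prop) :
  exists d, banach_density G C d.
Proof.
  destruct (completeness (upper_admissible G C)) as [d Hd].
  - exists 1. intros a Ha. destruct (Ha [] 1 ltac:(lra)) as [K [[_ [Hne _]] Hr]].
    pose proof (ratio_bounds G C K Hne). lra.
  - exists 0. intros H e He. destruct (HG H e He) as [K HK]. exists K. split; auto.
    destruct HK as [_ [Hne _]]. apply ratio_bounds; auto.
  - exists d; exact Hd.
Qed.

Lemma banach_density_le_1 (C : G -> Prop) d : banach_density G C d -> d <= 1.
Proof.
  intros [_ Hd]. apply Hd. intros a Ha. destruct (Ha [] 1 ltac:(lra)) as [K [[_ [Hne _]] Hr]].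
  pose proof (ratio_bounds G C K Hne). lra.
Qed.

End Density.

Lemma folner_witness (G : Group) (HG : amenable G) (C : G -> Prop) (a eps delta : R)
  (k : nat) (g : nat -> G) :
  banach_density G C a -> 0 < delta ->
  exists K, NoDup K /\ K <> [] /\
   (forall j, (j < k)%nat -> a - delta <= ratio G (ltranslate G (g j) C) K <= a + delta) /\
   (forall i j, (i < k)%nat -> (j < k)%nat ->
       ~ DeltaSet G eps C (gmul G (ginv G (g i)) (g j)) ->
       ratio G (fun x => ltranslate G (g i) C x /\ ltranslate G (g j) C x) K <= eps + delta).
Proof.
  intros Hd Hdel.
  (* C ∩ g_i⁻¹g_j C, whose translate by g_i is g_i C ∩ g_j C. *)
  set (Cp := fun i j x => C x /\ ltranslate G (gmul G (ginv G (g i)) (g j)) C x).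
  assert (HCp : forall i j x, ltranslate G (g i) (Cp i j) x <->
                              ltranslate G (g i) C x /\ ltranslate G (g j) C x).
  { intros i j x.
    pose proof (ltranslate_mul G (g i) (gmul G (ginv G (g i)) (g j)) C x) as E.
    rewrite gmul_VK in E. unfold Cp.
    split; intros [H1 H2]; split; try exact H1; apply E; exact H2. }
  set (P := fun K => ratio G C K < a + delta / 2 /\
      (forall j, (j < k)%nat -> forall Q,
         ratio G (ltranslate G (g j) Q) K <= ratio G Q K + delta / 2 /\
         ratio G Q K <= ratio G (ltranslate G (g j) Q) K + delta / 2) /\
      (forall i, (i < k)%nat -> forall j, (j < k)%nat ->
         ~ DeltaSet G eps C (gmul G (ginv G (g i)) (g j)) -> ratio G (Cp i j) K < eps + delta / 2)).
  assert (HP : eventually G P).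
  { apply eventually_and; [|apply eventually_and].
    - apply (eventually_below_density G C a); auto. lra.
    - apply eventually_forall_lt. intros j _. apply eventually_translate_close. lra.
    - apply eventually_forall_lt. intros i _. apply eventually_forall_lt. intros j _.
      apply eventually_impl. intro Hn.
      destruct (banach_density_exists G HG (Cp i j)) as [d Hdd].
      assert (d <= eps) by (apply Rnot_lt_le; intro; apply Hn; exists d; auto).
      apply (eventually_below_density G _ d); auto. lra. }
  destruct (density_frequently_above G C a P (delta / 2) Hd HP ltac:(lra))
    as [K [[HC [Htr Hpair]] [Hnd [Hne Hlow]]]].
  exists K. split; [exact Hnd|]. split; [exact Hne|]. split.
  - intros j Hj. destruct (Htr j Hj C). split; lra.
  - intros i j Hi Hj Hn. specialize (Hpair i Hi j Hj Hn).
    destruct (Htr i Hi (Cp i j)) as [T1 _].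
    rewrite (ratio_ext G _ (ltranslate G (g i) (Cp i j))) by (intro x; rewrite HCp; tauto).
    lra.
Qed.

Lemma folner_witness_family (G : Group) (HG : amenable G) (n : nat)
  (A : nat -> G -> Prop) (alpha : nat -> R)
  (Hdens : forall i, (i < n)%nat -> banach_density G (A i) (alpha i))
  (eps delta : R) (k : nat) (g : nat -> G) :
  0 < delta ->
  exists Kf : nat -> list G, forall l, Kf l <> [] /\ ((l < n)%nat ->
    (forall j, (j < k)%nat ->
       alpha l - delta <= ratio G (ltranslate G (g j) (A l)) (Kf l) <= alpha l + delta) /\
    (forall i j, (i < k)%nat -> (j < k)%nat ->
       ~ DeltaSet G eps (A l) (gmul G (ginv G (g i)) (g j)) ->
       ratio G (fun x => ltranslate G (g i) (A l) x /\ ltranslate G (g j) (A l) x) (Kf l)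
         <= eps + delta)).
Proof.
  intro Hd.
  assert (Hwit : forall l, exists K : list G, K <> [] /\ ((l < n)%nat ->
    (forall j, (j < k)%nat ->
       alpha l - delta <= ratio G (ltranslate G (g j) (A l)) K <= alpha l + delta) /\
    (forall i j, (i < k)%nat -> (j < k)%nat ->
       ~ DeltaSet G eps (A l) (gmul G (ginv G (g i)) (g j)) ->
       ratio G (fun x => ltranslate G (g i) (A l) x /\ ltranslate G (g j) (A l) x) K
         <= eps + delta))).
  { intro l. destruct (Compare_dec.lt_dec l n) as [Hl|Hl].
    - destruct (folner_witness G HG (A l) (alpha l) eps delta k g (Hdens l Hl) Hd)
        as [K [_ [Hne [H1 H2]]]].
      exists K. auto.
    - exists [gone G]. split; [congruence|]. intro; lia. }
  exact (choice _ Hwit).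
Qed.

Lemma separated_family_estimate (G : Group) (n k : nat) (alpha : nat -> R) (eps delta : R)
  (K : nat -> list G) (B : nat -> nat -> G -> Prop) :
  (forall l, K l <> []) ->
  (forall l, (l < n)%nat -> 0 <= alpha l <= 1) ->
  0 <= delta -> INR n * delta <= prodR alpha n ->
  (forall j l, (j < k)%nat -> (l < n)%nat ->
     alpha l - delta <= ratio G (B j l) (K l) <= alpha l + delta) ->
  (forall i j, (i < j)%nat -> (j < k)%nat -> exists l, (l < n)%nat /\
     ratio G (fun x => B i l x /\ B j l x) (K l) <= eps + delta) ->
  (INR k * (prodR alpha n - INR n * delta)) ^ 2 <=
  INR k * ((eps + delta) * INR k + (prodR alpha n + INR n * delta - (eps + delta))).
Proof.
  intros HK Halpha Hd HNd Hfreq Hpair.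
  set (beta := prodR alpha n) in *. set (N := INR n) in *. set (Kr := INR k).
  set (u := fun j => prodR (fun l => ratio G (B j l) (K l)) n).
  set (w := fun i j => prodR (fun l => ratio G (fun x => B i l x /\ B j l x) (K l)) n).
  assert (Hu : forall j, (j < k)%nat -> beta - N * delta <= u j <= beta + N * delta).
  { intros j Hj. apply prodR_close; auto. intros l Hl.
    pose proof (Halpha l Hl). pose proof (ratio_bounds G (B j l) (K l) (HK l)).
    pose proof (Hfreq j l Hj Hl). lra. }
  (* Off the diagonal, the separating coordinate bounds the whole product. *)
  assert (Hoff : forall i j, (i < j)%nat -> (j < k)%nat -> w i j <= eps + delta /\ w j i <= eps + delta).
  { intros i j Hij Hj. destruct (Hpair i j Hij Hj) as [l [Hl Hr]]. unfold w. split.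
    - apply Rle_trans with (ratio G (fun x => B i l x /\ B j l x) (K l)); [|exact Hr].
      apply (prodR_le_factor (fun l => ratio G (fun x => B i l x /\ B j l x) (K l))); auto.
      intros; apply ratio_bounds; auto.
    - apply Rle_trans with (ratio G (fun x => B j l x /\ B i l x) (K l)).
      + apply (prodR_le_factor (fun l => ratio G (fun x => B j l x /\ B i l x) (K l))); auto.
        intros; apply ratio_bounds; auto.
      + rewrite (ratio_ext G _ (fun x => B i l x /\ B j l x)) by tauto. exact Hr. }
  assert (Hw : forall i j, (i < k)%nat -> (j < k)%nat ->
     w i j <= if Nat.eq_dec j i then beta + N * delta else eps + delta).
  { intros i j Hi Hj. destruct (Nat.eq_dec j i) as [->|Hji].
    - unfold w. rewrite (prodR_ext _ (fun l => ratio G (B i l) (K l))).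
      + apply (Hu i Hi).
      + intros l _. apply ratio_ext. tauto.
    - destruct (Compare_dec.lt_dec i j).
      + exact (proj1 (Hoff i j ltac:(lia) Hj)).
      + exact (proj2 (Hoff j i ltac:(lia) Hi)). }
  assert (HCS : sumN u k * sumN u k <= sumN (fun i => sumN (fun j => w i j) k) k)
    by exact (correlation_inequality G K B n k HK).
  assert (Hlow : Kr * (beta - N * delta) <= sumN u k).
  { unfold Kr. rewrite Rmult_comm, <- sumN_const. apply sumN_le. intros j Hj. apply Hu; auto. }
  assert (Hup : sumN (fun i => sumN (fun j => w i j) k) k <=
      Kr * ((eps + delta) * Kr + (beta + N * delta - (eps + delta)))).
  { unfold Kr. rewrite Rmult_comm, <- sumN_const. apply sumN_le. intros i Hi.
    eapply Rle_trans.
    { apply (sumN_le _ (fun j => if Nat.eq_dec j i then beta + N * delta else eps + delta)).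
      intros j Hj. apply Hw; auto. }
    rewrite sumN_diag by exact Hi. lra. }
  assert (0 <= Kr * (beta - N * delta)) by (apply Rmult_le_pos; [apply pos_INR|lra]).
  simpl. rewrite Rmult_1_r.
  assert (Kr * (beta - N * delta) * (Kr * (beta - N * delta)) <= sumN u k * sumN u k)
    by (apply Rmult_le_compat; lra).
  lra.
Qed.

Lemma nonneg_of_small_defect (x C d0 : R) : 0 <= C -> 0 < d0 ->
  (forall d, 0 < d < d0 -> - (d * C) <= x) -> 0 <= x.
Proof.
  intros HC Hd0 H. apply Rnot_lt_le. intro Hx.
  set (d := Rmin (d0 / 2) (- x / (2 * (C + 1)))).
  assert (Hd : 0 < d) by (apply Rmin_pos; apply Rdiv_lt_0_compat; lra).
  assert (Hdd0 : d < d0).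
  { pose proof (Rmin_l (d0 / 2) (- x / (2 * (C + 1)))) as Hl. fold d in Hl. lra. }
  assert (HdC : d * (C + 1) <= - x / 2).
  { pose proof (Rmin_r (d0 / 2) (- x / (2 * (C + 1)))) as Hr. fold d in Hr.
    apply Rmult_le_compat_r with (r := C + 1) in Hr; [|lra].
    replace (- x / (2 * (C + 1)) * (C + 1)) with (- x / 2) in Hr by (field; lra). exact Hr. }
  specialize (H d (conj Hd Hdd0)). nra.
Qed.

(* Letting delta → 0 in separated_family_estimate. *)
Lemma estimate_limit (k N beta eps : R) : 0 <= k -> 0 <= N -> 0 < beta ->
  (forall delta, 0 < delta -> N * delta <= beta ->
     (k * (beta - N * delta)) ^ 2 <= k * ((eps + delta) * k + (beta + N * delta - (eps + delta)))) ->
  k * k * (beta * beta) <= k * (eps * k + beta - eps).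
Proof.
  intros Hk HN Hb H.
  enough (0 <= k * (eps * k + beta - eps) - k * k * (beta * beta)) by lra.
  apply (nonneg_of_small_defect _ (k * (k + N) + 2 * k * k * beta * N) (beta / (N + 1))).
  - assert (0 <= k * k * beta * N) by (repeat apply Rmult_le_pos; lra). nra.
  - apply Rdiv_lt_0_compat; lra.
  - intros d [Hd Hdb].
    assert (HNd : N * d <= beta).
    { apply Rmult_lt_compat_r with (r := N + 1) in Hdb; [|lra].
      replace (beta / (N + 1) * (N + 1)) with beta in Hdb by (field; lra). nra. }
    specialize (H d Hd HNd).
    assert (0 <= k * k * (N * d) * (N * d)) by (repeat apply Rmult_le_pos; nra).
    assert (0 <= d * k) by nra.
    nra.
Qed.

Definition separated_family (G : Group) (S : G -> Prop) (g : nat -> G) (k : nat) : Prop :=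
  forall i j, (i < j)%nat -> (j < k)%nat -> ~ S (gmul G (ginv G (g i)) (g j)).

Definition delta_meet (G : Group) (eps : R) (A : nat -> G -> Prop) (n : nat) : G -> Prop :=
  fun g => forall i, (i < n)%nat -> DeltaSet G eps (A i) g.

Lemma separated_family_bound (G : Group) (HG : amenable G) (n : nat)
  (A : nat -> G -> Prop) (alpha : nat -> R)
  (Hdens : forall i, (i < n)%nat -> banach_density G (A i) (alpha i))
  (Hpos : forall i, (i < n)%nat -> 0 < alpha i)
  (eps : R) (Heps : eps < (prodR alpha n) ^ 2) (k : nat) (g : nat -> G) :
  separated_family G (delta_meet G eps A n) g k ->
  INR k * ((prodR alpha n) ^ 2 - eps) <= prodR alpha n - eps.
Proof.
  intro Hsep.
  assert (Halpha : forall l, (l < n)%nat -> 0 <= alpha l <= 1).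
  { intros l Hl. split; [left; auto|]. apply (banach_density_le_1 G (A l)), Hdens, Hl. }
  set (beta := prodR alpha n) in *.
  assert (Hb : 0 < beta <= 1) by (split; [apply prodR_pos|apply prodR_bounds]; auto).
  assert (Hlim : INR k * INR k * (beta * beta) <= INR k * (eps * INR k + beta - eps)).
  { apply (estimate_limit (INR k) (INR n)); [apply pos_INR|apply pos_INR|lra|].
    intros delta Hd HNd.
    destruct (folner_witness_family G HG n A alpha Hdens eps delta k g Hd) as [Kf HKf].
    apply (separated_family_estimate G n k alpha eps delta Kf (fun j l => ltranslate G (g j) (A l))).
    - intro l. apply (HKf l).
    - exact Halpha.
    - lra.
    - exact HNd.
    - intros j l Hj Hl. apply (proj2 (HKf l) Hl); auto.
    - intros i j Hij Hj.
      assert (Hout : exists l, (l < n)%nat /\ ~ DeltaSet G eps (A l) (gmul G (ginv G (g i)) (g j))).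
      { apply NNPP. intro Hno. apply (Hsep i j Hij Hj). intros l Hl.
        apply NNPP. intro Hd'. apply Hno. exists l. auto. }
      destruct Hout as [l [Hl Hnd]].
      exists l. split; auto. apply (proj2 (HKf l) Hl); auto; lia. }
  assert (Hk : 0 <= INR k) by apply pos_INR.
  destruct (Rle_lt_or_eq_dec 0 (INR k) Hk) as [Hkp|Hk0].
  - apply Rmult_le_reg_l with (INR k); [exact Hkp|]. nra.
  - rewrite <- Hk0. nra.
Qed.

Lemma last_true (P : nat -> Prop) (b : nat) :
  P 0%nat -> (forall k, P k -> (k <= b)%nat) -> exists k, P k /\ ~ P (S k).
Proof.
  revert P; induction b; intros P H0 Hb.
  - exists 0%nat. split; auto. intro H1. specialize (Hb 1%nat H1). lia.
  - destruct (classic (P (S b))) as [Hs|Hs].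
    + exists (S b). split; auto. intro H1. specialize (Hb _ H1). lia.
    + apply IHb; auto. intros k Hk. specialize (Hb k Hk).
      destruct (Nat.eq_dec k (S b)); [subst; contradiction|lia].
Qed.

(* If D-separated families have at most r elements, D is r-syndetic: a maximal
   separated family g_0, ..., g_{k-1} cannot be extended by any x, so some
   g_i⁻¹ x lies in D, i.e. x ∈ g_i D. *)
Lemma syndetic_of_bounded_separated (G : Group) (D : G -> Prop) (r : nat) :
  (forall g k, separated_family G D g k -> (k <= r)%nat) -> syndetic G r D.
Proof.
  intro Hbound.
  destruct (last_true (fun k => exists g, separated_family G D g k) r) as [k [[g Hg] Hmax]].
  { exists (fun _ => gone G). intros i j; lia. }
  { intros k [g Hg]. exact (Hbound g k Hg). }
  exists (map g (seq 0 k)). split; [rewrite length_map, length_seq; eauto|].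
  intro x.
  set (g' := fun j => if Nat.eq_dec j k then x else g j).
  assert (Hnsep : ~ separated_family G D g' (S k)) by (intro; apply Hmax; eauto).
  unfold separated_family in Hnsep.
  apply not_all_ex_not in Hnsep as [i Hnsep]. apply not_all_ex_not in Hnsep as [j Hnsep].
  apply imply_to_and in Hnsep as [Hij Hnsep]. apply imply_to_and in Hnsep as [Hj Hnsep].
  apply NNPP in Hnsep. unfold g' in Hnsep.
  destruct (Nat.eq_dec i k) as [Hik|Hik]; [lia|].
  destruct (Nat.eq_dec j k) as [Hjk|Hjk].
  - exists (g i), (gmul G (ginv G (g i)) x). repeat split; auto.
    + apply in_map, in_seq. lia.
    + rewrite gmul_VK. reflexivity.
  - exfalso. apply (Hg i j); auto. lia.
Qed.

Lemma cover_count {T U : Type} (F : list U) (P : U -> T -> Prop) (K : list T) :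
  (forall x, In x K -> exists f, In f F /\ P f x) ->
  INR (length K) <= sumL (fun f => INR (countP (P f) K)) F.
Proof.
  induction K as [|x K IH]; intro H.
  - cbn [length INR]. apply sumL_nonneg. intro; apply pos_INR.
  - cbn [length]. rewrite S_INR.
    replace (fun f => INR (countP (P f) (x :: K))) with
      (fun f => indic (fun f => P f x) f + INR (countP (P f) K)).
    2:{ apply functional_extensionality; intro f. rewrite countP_cons, plus_INR. unfold indic.
        destruct (excluded_middle_informative (P f x)); simpl; lra. }
    rewrite sumL_add.
    assert (IH' := IH (fun y Hy => H y (or_intror Hy))).
    destruct (H x (or_introl eq_refl)) as [f [Hf Hp]].
    enough (1 <= sumL (indic (fun f => P f x)) F) by lra.
    replace 1 with (indic (fun f => P f x) f)
      by (unfold indic; destruct (excluded_middle_informative _); tauto).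
    apply sumL_ge_elem; auto.
    intro y; unfold indic; destruct (excluded_middle_informative _); lra.
Qed.

(* If G = F D, every element of a (F⁻¹, delta)-invariant K lies in one of the |F|
   translates f D, each of which has frequency at most freq(D) + delta on K. *)
Lemma syndetic_frequency (G : Group) (F : list G) (D : G -> Prop) (delta : R) (K : list G) :
  (forall g, exists f s, In f F /\ D s /\ g = gmul G f s) ->
  invariant G (map (ginv G) F) delta K ->
  1 <= INR (length F) * (ratio G D K + delta).
Proof.
  intros HF HK. pose proof HK as [_ [Hne _]]. pose proof (length_pos K Hne) as HL.
  set (L := INR (length K)) in *.
  assert (Hcov : L <= sumL (fun f => INR (countP (ltranslate G f D) K)) F).
  { apply cover_count. intros x _. destruct (HF x) as [f [s [Hf [Hs ->]]]].
    exists f. split; auto. unfold ltranslate. rewrite gmul_KV. exact Hs. }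
  assert (Hsum : sumL (fun f => INR (countP (ltranslate G f D) K)) F <=
                 sumL (fun _ => (ratio G D K + delta) * L) F).
  { apply sumL_le. intros f Hf.
    destruct (ratio_ltranslate_close G (map (ginv G) F) delta K f D HK) as [Hc _];
      [apply in_map; exact Hf|].
    unfold ratio at 1 in Hc. fold L in Hc.
    apply Rmult_le_compat_r with (r := L) in Hc; [|lra].
    unfold Rdiv in Hc. rewrite Rmult_assoc, Rinv_l, Rmult_1_r in Hc by lra. exact Hc. }
  rewrite sumL_const in Hsum.
  apply Rmult_le_reg_r with L; [exact HL|]. lra.
Qed.

Lemma lower_banach_density_exists (G : Group) (HG : amenable G) (D : G -> Prop) :
  exists l, lower_banach_density G D l.
Proof.
  destruct (completeness (lower_admissible G D)) as [l Hl].
  - exists 1. intros a [H [e [He Ha]]]. destruct (HG H e He) as [K HK].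
    specialize (Ha K HK). destruct HK as [_ [Hne _]].
    pose proof (ratio_bounds G D K Hne). lra.
  - exists 0, [], 1. split; [lra|]. intros K [_ [Hne _]]. apply ratio_bounds; auto.
  - exists l; exact Hl.
Qed.

Lemma syndetic_lower_density (G : Group) (HG : amenable G) (r : nat) (D : G -> Prop) :
  syndetic G r D -> exists l, lower_banach_density G D l /\ 1 / INR r <= l.
Proof.
  intros [F [HFr HF]].
  destruct (lower_banach_density_exists G HG D) as [l Hl]. exists l. split; [exact Hl|].
  set (m := INR (length F)).
  assert (Hm : 1 <= m).
  { destruct (HF (gone G)) as [f [s [Hf _]]]. unfold m.
    destruct F as [|f0 F]; [destruct Hf|]. cbn [length]. rewrite S_INR.
    pose proof (pos_INR (length F)). lra. }
  assert (Hadm : forall delta, 0 < delta -> lower_admissible G D (1 / m - delta)).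
  { intros delta Hd. exists (map (ginv G) F), delta. split; [exact Hd|]. intros K HK.
    pose proof (syndetic_frequency G F D delta K HF HK) as Hfreq. fold m in Hfreq.
    enough (1 / m <= ratio G D K + delta) by lra.
    apply Rmult_le_reg_l with m; [lra|]. unfold Rdiv. rewrite Rmult_1_l, Rinv_r by lra. lra. }
  assert (Hlm : 1 / m <= l).
  { apply Rnot_lt_le. intro Hlt.
    pose proof (proj1 Hl _ (Hadm ((1 / m - l) / 2) ltac:(lra))). lra. }
  assert (1 / INR r <= 1 / m).
  { unfold Rdiv. rewrite !Rmult_1_l. apply Rinv_le_contravar; [lra|]. apply le_INR, HFr. }
  lra.
Qed.

(* Main theorem: S = ⋂_i Δ_eps(A_i) is r-syndetic and has lower Banach density at
   least 1/r. *)
Theorem mainTheorem10 (G : Group) (HG : amenable G) (n : nat)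
  (A : nat -> G -> Prop) (alpha : nat -> R)
  (Hdens : forall i, (i < n)%nat -> banach_density G (A i) (alpha i))
  (Hpos : forall i, (i < n)%nat -> 0 < alpha i)
  (eps : R) (Heps0 : 0 <= eps) (Heps1 : eps < (prodR alpha n) ^ 2)
  (r : nat)
  (Hr : INR r <= (prodR alpha n - eps) / ((prodR alpha n) ^ 2 - eps) < INR r + 1) :
  let S := fun g : G => forall i, (i < n)%nat -> DeltaSet G eps (A i) g in
  syndetic G r S /\
  exists l, lower_banach_density G S l /\ 1 / INR r <= l.
Proof.
  intro S.
  assert (Hsep : forall g k, separated_family G S g k -> (k <= r)%nat).
  { intros g k Hg.
    pose proof (separated_family_bound G HG n A alpha Hdens Hpos eps Heps1 k g Hg) as Hk.
    set (beta := prodR alpha n) in *.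
    assert (INR k <= (beta - eps) / (beta ^ 2 - eps)).
    { apply Rmult_le_reg_r with (beta ^ 2 - eps); [lra|].
      unfold Rdiv. rewrite Rmult_assoc, Rinv_l by lra. lra. }
    assert (Hlt : INR k < INR (r + 1)) by (rewrite plus_INR, INR_1; lra).
    apply INR_lt in Hlt. lia. }
  assert (Hsyn : syndetic G r S) by (apply syndetic_of_bounded_separated; exact Hsep).
  split; [exact Hsyn|]. apply syndetic_lower_density; assumption.
Qed.
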